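(* Let $n>0$ be an integer and $\alpha$ a dipath on $\vec{|\square[n]|}$ (whose underlying space is $\mathbb{I}^n$). For $x\in\mathbb{I}^n$ let $v(x)\in\{0,1\}^n$ be the vertex with coordinates $v(x)_i=1$ if $x_i=1$ and $v(x)_i=0$ otherwise (equivalently $v(x)=\mathrm{supp}(x)_*(0,\ldots,0)$). Then there is a dipath $\beta$ on $\vec{|\square[n]|}$ from $v(\alpha(0))$ to $v(\alpha(1))$ such that $U(\beta)$ is cellular (it maps $\{0,1\}$ to vertices and $[0,1]$ into the union of the edges of the cube). Moreover, if $\alpha(0)$ and $\alpha(1)$ lie in the boundary $\partial\mathbb{I}^n$ (points having some coordinate equal to $0$ or $1$) and $\alpha(\tfrac12)$ lies in the interior $(0,1)^n$, then $\beta$ is non-constant.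
   Context: Streams: a circulation on a space $X$ assigns to each open $V\subset X$ a preorder $\leqslant_V$ such that for every collection $\mathcal{O}$ of open sets, $\leqslant_{\bigcup\mathcal{O}}$ is the preorder with smallest graph containing $\bigcup_{V\in\mathcal{O}}\mathrm{graph}(\leqslant_V)$; a stream is a space with a circulation; a stream map $f:X\to Y$ is continuous with $f(x)\leqslant_V f(y)$ whenever $x\leqslant_{f^{-1}V}y$; $U$ is the forgetful functor to spaces. $\vec\square[1]$ is $[0,1]$ with circulation $x\leqslant_V y$ iff $x\le y$ and $[x,y]\subset V$; a dipath is a stream map from $\vec\square[1]$. $\square[n]=\square(-,[1]^n)$ is the representable precubical set, where $\square$ is the smallest subcategory of posets and monotone maps closed under cartesian products containing $\delta_\pm:\{0\}\to\{0<1\}$. Its stream realization $\vec{|\square[n]|}$ is the stream $\vec\square[n]$, the $n$-fold product of $\vec\square[1]$ in streams, with underlying space $\mathbb{I}^n$ (CW structure: the standard cubical cells) and $\leqslant_{\mathbb{I}^n}$ the coordinatewise order. $[0,1]$ has CW structure with vertices $0,1$. *)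

From Stdlib Require Import Reals.
Open Scope R_scope.

Definition inI (x : R) : Prop := 0 <= x <= 1.

Definition openI (V : R -> Prop) : Prop :=
  (forall x, V x -> inI x) /\
  (forall x, V x -> exists eps, 0 < eps /\
      forall y, inI y -> Rabs (y - x) < eps -> V y).

(* Circulation of the stream vec-square[1]:
   x <=_V y  iff  x <= y and [x,y] is contained in V. *)
Definition circ1 (V : R -> Prop) (x y : R) : Prop :=
  x <= y /\ (forall z, x <= z <= y -> V z).

Definition continuousI (f : R -> R) : Prop :=
  forall x, inI x -> forall eps, 0 < eps -> exists delta, 0 < delta /\
    forall y, inI y -> Rabs (y - x) < delta -> Rabs (f y - f x) < eps.

Definition stream_map_I (f : R -> R) : Prop :=
  (forall t, inI t -> inI (f t)) /\
  continuousI f /\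
  (forall V, openI V -> forall x y, inI x -> inI y ->
      circ1 (fun t => inI t /\ V (f t)) x y -> circ1 V (f x) (f y)).

(* A point of I^n is represented by its coordinate function (coordinates
   i < n are relevant); a map [0,1] -> I^n by  alpha : nat -> R -> R,
   alpha i t = i-th coordinate of alpha(t).
   vec-square[n] is the n-fold product of vec-square[1] in streams, so by the
   universal property of the product a stream map vec-square[1] -> vec-square[n]
   (a dipath) is exactly an n-tuple of stream maps vec-square[1] -> vec-square[1]. *)
Definition dipath (n : nat) (alpha : nat -> R -> R) : Prop :=
  forall i, (i < n)%nat -> stream_map_I (alpha i).

Definition vtx (x : nat -> R) : nat -> R :=
  fun i => if Req_EM_T (x i) 1 then 1 else 0.

Definition is_vertex (n : nat) (x : nat -> R) : Prop :=
  forall i, (i < n)%nat -> x i = 0 \/ x i = 1.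

Definition in_edges (n : nat) (x : nat -> R) : Prop :=
  exists j, forall i, (i < n)%nat -> i <> j -> x i = 0 \/ x i = 1.

Definition cellular (n : nat) (beta : nat -> R -> R) : Prop :=
  is_vertex n (fun i => beta i 0) /\ is_vertex n (fun i => beta i 1) /\
  (forall t, inI t -> in_edges n (fun i => beta i t)).

Definition in_boundary (n : nat) (x : nat -> R) : Prop :=
  exists i, (i < n)%nat /\ (x i = 0 \/ x i = 1).

Definition in_interior (n : nat) (x : nat -> R) : Prop :=
  forall i, (i < n)%nat -> 0 < x i < 1.

Definition nonconstant (n : nat) (beta : nat -> R -> R) : Prop :=
  exists t, inI t /\ exists i, (i < n)%nat /\ beta i t <> beta i 0.

From Stdlib Require Import Reals Lra Lia Classical.
Open Scope R_scope.

(* The dipath beta is a "staircase" from v(alpha(0)) to v(alpha(1)).  Since a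
   dipath is a tuple of monotone coordinates, alpha(0) <= alpha(1)
   coordinatewise, so a coordinate equal to 1 at time 0 is still 1 at time 1.
   Coordinate i of beta is therefore constantly 1 if alpha_i(0) = 1, constantly
   0 if alpha_i(1) <> 1, and otherwise it is the ramp clamp(n t - i), which
   rises from 0 to 1 during the time slot [i/n, (i+1)/n].  It then studies the ramps: they
   are stream maps with the right endpoint values, and two distinct ramps are
   never simultaneously strictly between 0 and 1, so the staircase always lies
   on an edge of the cube.  Finally, if alpha(1/2) is interior and alpha(1) is
   on the boundary, some coordinate rises from below 1 to 1, and the
   corresponding ramp makes the staircase non-constant. *)

Definition lipschitz (K : R) (f : R -> R) : Prop :=
  forall s t, Rabs (f s - f t) <= K * Rabs (s - t).

Lemma lipschitz_uniform f K : 0 < K -> lipschitz K f ->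
  forall eps, 0 < eps -> exists delta, 0 < delta /\
    forall s t, Rabs (s - t) < delta -> Rabs (f s - f t) < eps.
Proof.
  intros HK Hlip eps Heps. exists (eps / K). split.
  - apply Rdiv_lt_0_compat; lra.
  - intros s t Hst.
    assert (K * Rabs (s - t) < K * (eps / K)) by (apply Rmult_lt_compat_l; lra).
    replace (K * (eps / K)) with eps in H by (field; lra).
    specialize (Hlip s t). lra.
Qed.

Lemma lipschitz_continuity f K : 0 < K -> lipschitz K f -> continuity f.
Proof.
  intros HK Hlip s eps Heps.
  destruct (lipschitz_uniform f K HK Hlip eps Heps) as [delta [Hdelta Hf]].
  exists delta. split; [exact Hdelta|].
  intros t [_ Ht]. exact (Hf t s Ht).
Qed.

Lemma intermediate_value f x y w : continuity f -> x <= y -> f x <= w <= f y ->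
  exists z, x <= z <= y /\ f z = w.
Proof.
  intros Hf Hxy Hw.
  destruct (IVT_cor (fun t => f t - w) x y) as [z [Hz Hfz]].
  - apply continuity_minus; [exact Hf | apply continuity_const; now intros ? ?].
  - exact Hxy.
  - assert (f x - w <= 0) by lra. assert (0 <= f y - w) by lra. nra.
  - exists z. split; [exact Hz | lra].
Qed.

(* A monotone Lipschitz self-map of [0,1] is a stream map: the image of a
   circulation interval [x, y] inside f^{-1} V is the interval [f x, f y],
   which therefore lies in V. *)
Lemma monotone_lipschitz_stream_map f K : 0 < K -> lipschitz K f ->
  (forall t, inI t -> inI (f t)) -> (forall s t, s <= t -> f s <= f t) ->
  stream_map_I f.
Proof.
  intros HK Hlip HI Hmono. split; [exact HI | split].
  - intros s _ eps Heps.
    destruct (lipschitz_uniform f K HK Hlip eps Heps) as [delta [Hdelta Hf]].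
    exists delta. split; [exact Hdelta|]. intros t _ Ht. exact (Hf t s Ht).
  - intros V _ x y _ _ [Hxy Hpre]. split; [now apply Hmono|].
    intros w Hw.
    destruct (intermediate_value f x y w) as [z [Hz <-]].
    + exact (lipschitz_continuity f K HK Hlip).
    + exact Hxy.
    + exact Hw.
    + exact (proj2 (Hpre z Hz)).
Qed.

Lemma const_stream_map c : inI c -> stream_map_I (fun _ => c).
Proof.
  intros Hc. apply monotone_lipschitz_stream_map with 1.
  - lra.
  - intros s t. rewrite Rminus_diag, Rabs_R0. pose proof (Rabs_pos (s - t)). lra.
  - intros _ _. exact Hc.
  - intros _ _ _. lra.
Qed.

(* Stream maps are monotone: apply the circulation condition to V = [0,1]. *)
Lemma stream_map_monotone f s t :
  stream_map_I f -> inI s -> inI t -> s <= t -> f s <= f t.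
Proof.
  intros [HI [_ Hcirc]] Hs Ht Hst.
  assert (Hopen : openI inI).
  { split; [auto|]. intros z _. exists 1. split; [lra | auto]. }
  apply (Hcirc inI Hopen s t Hs Ht). split; [exact Hst|].
  intros z Hz. assert (inI z) by (unfold inI in *; lra). split; auto.
Qed.

Definition clamp (a : R) : R := Rmin 1 (Rmax 0 a).

Lemma clamp_lipschitz : lipschitz 1 clamp.
Proof. intros a b. unfold clamp, Rmin, Rmax. repeat destruct Rle_dec; split_Rabs; lra. Qed.

Lemma clamp_monotone a b : a <= b -> clamp a <= clamp b.
Proof. unfold clamp, Rmin, Rmax. intros. repeat destruct Rle_dec; lra. Qed.

Lemma clamp_inI a : inI (clamp a).
Proof. unfold inI, clamp, Rmin, Rmax. repeat destruct Rle_dec; lra. Qed.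

Lemma clamp_of_nonpos a : a <= 0 -> clamp a = 0.
Proof. unfold clamp, Rmin, Rmax. intros. repeat destruct Rle_dec; lra. Qed.

Lemma clamp_of_ge1 a : 1 <= a -> clamp a = 1.
Proof. unfold clamp, Rmin, Rmax. intros. repeat destruct Rle_dec; lra. Qed.

Lemma clamp_free a : ~ (clamp a = 0 \/ clamp a = 1) -> 0 < a < 1.
Proof. unfold clamp, Rmin, Rmax. intros. repeat destruct Rle_dec; lra. Qed.

Definition ramp (n i : nat) (t : R) : R := clamp (INR n * t - INR i).

Lemma ramp_stream_map n i : (0 < n)%nat -> stream_map_I (ramp n i).
Proof.
  intros Hn. pose proof (lt_0_INR n Hn) as HnR.
  apply monotone_lipschitz_stream_map with (INR n).
  - exact HnR.
  - intros s t. unfold ramp. eapply Rle_trans; [apply clamp_lipschitz|].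
    replace (INR n * s - INR i - (INR n * t - INR i)) with (INR n * (s - t)) by ring.
    rewrite Rabs_mult, (Rabs_pos_eq (INR n)); lra.
  - intros t _. apply clamp_inI.
  - intros s t Hst. apply clamp_monotone. nra.
Qed.

Lemma ramp_at_0 n i : ramp n i 0 = 0.
Proof. apply clamp_of_nonpos. rewrite Rmult_0_r. pose proof (pos_INR i). lra. Qed.

Lemma ramp_at_1 n i : (i < n)%nat -> ramp n i 1 = 1.
Proof.
  intros Hi. apply clamp_of_ge1.
  assert (INR i + 1 <= INR n) by (rewrite <- S_INR; apply le_INR; lia). lra.
Qed.

Lemma ramp_free_unique n i j t :
  ~ (ramp n i t = 0 \/ ramp n i t = 1) -> ~ (ramp n j t = 0 \/ ramp n j t = 1) ->
  i = j.
Proof.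
  intros Hi Hj. apply clamp_free in Hi, Hj.
  destruct (Nat.lt_total i j) as [Hij | [Hij | Hij]]; [exfalso | exact Hij | exfalso].
  - assert (INR i + 1 <= INR j) by (rewrite <- S_INR; apply le_INR; lia). lra.
  - assert (INR j + 1 <= INR i) by (rewrite <- S_INR; apply le_INR; lia). lra.
Qed.

Lemma in_edges_of_unique_free n (z : nat -> R) :
  (forall i j, (i < n)%nat -> (j < n)%nat ->
     ~ (z i = 0 \/ z i = 1) -> ~ (z j = 0 \/ z j = 1) -> i = j) ->
  in_edges n z.
Proof.
  intros Hunique.
  destruct (classic (exists j, (j < n)%nat /\ ~ (z j = 0 \/ z j = 1)))
    as [[j [Hj Hfree]] | Hnone].
  - exists j. intros i Hi Hij. apply NNPP. intros Hfree_i.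
    exact (Hij (Hunique i j Hi Hj Hfree_i Hfree)).
  - exists O. intros i Hi _. apply NNPP. intros Hfree_i. apply Hnone. now exists i.
Qed.

Lemma vtx_binary (x : nat -> R) i : vtx x i = 0 \/ vtx x i = 1.
Proof. unfold vtx. destruct Req_EM_T; auto. Qed.

Definition staircase (n : nat) (x y : nat -> R) (i : nat) : R -> R :=
  if Req_EM_T (x i) 1 then fun _ => 1
  else if Req_EM_T (y i) 1 then ramp n i else fun _ => 0.

Lemma staircase_dipath n x y : dipath n (staircase n x y).
Proof.
  intros i Hi. unfold staircase.
  destruct Req_EM_T; [|destruct Req_EM_T].
  - apply const_stream_map. unfold inI; lra.
  - apply ramp_stream_map. lia.
  - apply const_stream_map. unfold inI; lra.
Qed.

Lemma staircase_endpoints n x y i : (i < n)%nat -> x i <= y i -> inI (y i) ->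
  staircase n x y i 0 = vtx x i /\ staircase n x y i 1 = vtx y i.
Proof.
  intros Hi Hxy [_ Hy1]. unfold staircase, vtx.
  destruct (Req_EM_T (x i) 1); destruct (Req_EM_T (y i) 1); try (split; reflexivity).
  - exfalso. lra.
  - split; [apply ramp_at_0 | now apply ramp_at_1].
Qed.

(* At every time the staircase lies on the 1-skeleton: a free coordinate of it
   is a free ramp, and at most one ramp is free at a time. *)
Lemma staircase_in_edges n x y t : in_edges n (fun i => staircase n x y i t).
Proof.
  apply in_edges_of_unique_free. intros i j _ _ Hi Hj.
  assert (Hramp : forall k, ~ (staircase n x y k t = 0 \/ staircase n x y k t = 1) ->
                    staircase n x y k t = ramp n k t).
  { intros k. unfold staircase. destruct Req_EM_T; [|destruct Req_EM_T]; tauto. }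
  rewrite (Hramp i Hi) in Hi. rewrite (Hramp j Hj) in Hj.
  exact (ramp_free_unique n i j t Hi Hj).
Qed.

Lemma staircase_cellular n x y :
  (forall i, (i < n)%nat -> x i <= y i /\ inI (y i)) -> cellular n (staircase n x y).
Proof.
  intros Hxy. split; [|split].
  - intros i Hi. destruct (Hxy i Hi) as [Hle HyI].
    rewrite (proj1 (staircase_endpoints n x y i Hi Hle HyI)). apply vtx_binary.
  - intros i Hi. destruct (Hxy i Hi) as [Hle HyI].
    rewrite (proj2 (staircase_endpoints n x y i Hi Hle HyI)). apply vtx_binary.
  - intros t _. apply staircase_in_edges.
Qed.

Lemma staircase_nonconstant n x y j : (j < n)%nat -> x j <> 1 -> y j = 1 ->
  nonconstant n (staircase n x y).
Proof.
  intros Hj Hx Hy. exists 1. split; [unfold inI; lra|]. exists j. split; [exact Hj|].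
  unfold staircase. destruct Req_EM_T; [contradiction|].
  destruct Req_EM_T; [|contradiction].
  rewrite ramp_at_1, ramp_at_0; [lra | exact Hj].
Qed.

Lemma dipath_rising_coordinate n alpha : dipath n alpha ->
  in_boundary n (fun j => alpha j 1) -> in_interior n (fun j => alpha j (1/2)) ->
  exists j, (j < n)%nat /\ alpha j 0 <> 1 /\ alpha j 1 = 1.
Proof.
  intros Halpha [j [Hj Hend]] Hint. exists j. split; [exact Hj|].
  pose proof (Hint j Hj) as Hmid. simpl in Hend, Hmid.
  assert (alpha j 0 <= alpha j (1/2))
    by (apply stream_map_monotone; [exact (Halpha j Hj) | unfold inI; lra ..]).
  assert (alpha j (1/2) <= alpha j 1)
    by (apply stream_map_monotone; [exact (Halpha j Hj) | unfold inI; lra ..]).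
  lra.
Qed.

Theorem mainTheorem7 (n : nat) (hn : (0 < n)%nat) (alpha : nat -> R -> R)
  (halpha : dipath n alpha) :
  exists beta : nat -> R -> R,
    dipath n beta /\
    (forall i, (i < n)%nat ->
       beta i 0 = vtx (fun j => alpha j 0) i /\
       beta i 1 = vtx (fun j => alpha j 1) i) /\
    cellular n beta /\
    (in_boundary n (fun j => alpha j 0) ->
     in_boundary n (fun j => alpha j 1) ->
     in_interior n (fun j => alpha j (1/2)) ->
     nonconstant n beta).
Proof.
  pose (x := fun j => alpha j 0). pose (y := fun j => alpha j 1).
  assert (Hxy : forall i, (i < n)%nat -> x i <= y i /\ inI (y i)).
  { intros i Hi. split.
    - apply stream_map_monotone; [exact (halpha i Hi) | unfold inI; lra ..].
    - apply (halpha i Hi). unfold inI; lra. }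
  exists (staircase n x y).
  split; [apply staircase_dipath|]. split; [|split].
  - intros i Hi. destruct (Hxy i Hi) as [Hle HyI].
    exact (staircase_endpoints n x y i Hi Hle HyI).
  - exact (staircase_cellular n x y Hxy).
  - intros _ Hend Hmid.
    destruct (dipath_rising_coordinate n alpha halpha Hend Hmid) as [j [Hj [Hx Hy]]].
    exact (staircase_nonconstant n x y j Hj Hx Hy).
Qed.
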